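(* Let $d\ge2$, $H=\sum_{k=0}^{d-1}h_k|k\rangle\langle k|$ Hermitian on $\mathbb{C}^d$, $\rho_0$ a density matrix and $U_\tau$ a unitary on $\mathbb{C}^d$. For the cyclic process $H_0=H_\tau=H$, $$\big|\langle w_\tau^2\rangle_{\mathrm{MH}}-\langle w_\tau^2\rangle_{\mathrm{TPM}}\big|\le \frac{C_{l_1}(\rho_0)}{2}\Big(\mathrm{Tr}\,H^2+2\max_k|h_k|\,\mathrm{Tr}|H|\Big).$$ Moreover, if $d=2$ then $\langle w_\tau^2\rangle_{\mathrm{MH}}=\langle w_\tau^2\rangle_{\mathrm{TPM}}$ for every qubit state $\rho_0$, every $2\times2$ unitary $U_\tau$ and every $H$.
   Context: Setting: cyclic process with Hamiltonian $H$ (eigenbasis $\{|n\rangle\}$, $\Pi_n=|n\rangle\langle n|$) and unitary $U_\tau$. The TPM joint probability is $P^{\mathrm{TPM}}(m,n)=\mathrm{Tr}[\Pi_m U_\tau \Pi_n\rho_0\Pi_n U_\tau^\dagger \Pi_m]$ and the Margenau–Hill quasiprobability is $P^{\mathrm{MH}}(m,n)=\mathrm{Re}\,\mathrm{Tr}[U_\tau^\dagger \Pi_m U_\tau \Pi_n \rho_0]$; moments are $\langle w_\tau^k\rangle_{\mathcal O}=\sum_{m,n}P^{\mathcal O}(m,n)(h_m-h_n)^k$. Equivalently $\langle w_\tau^2\rangle_{\mathrm{TPM}}=\mathrm{Tr}[\Delta(\rho_0)(U_\tau^\dagger HU_\tau-H)^2]$ and $\langle w_\tau^2\rangle_{\mathrm{MH}}=\mathrm{Tr}[\rho_0(U_\tau^\dagger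 HU_\tau-H)^2]$, with $\Delta(\rho)=\sum_n\Pi_n\rho\Pi_n$. $C_{l_1}(\rho)=\sum_{i\ne j}|\langle i|\rho|j\rangle|$ is the $l_1$-coherence in the basis $\{|k\rangle\}$; $\mathrm{Tr}|H|=\sum_k|h_k|$. *)

(* Complex scalars: an arbitrary numClosedFieldType C
   (e.g. algC, or complex R over a real closed field). *)
From HB Require Import structures.
From mathcomp Require Import all_boot all_order all_algebra.
From mathcomp Require Import sesquilinear spectral.
Set Implicit Arguments. Unset Strict Implicit. Unset Printing Implicit Defensive.
Import Order.TTheory GRing.Theory Num.Theory.
Local Open Scope ring_scope.
Local Open Scope sesquilinear_scope.

Section Defs.
Variable C : numClosedFieldType.
Variable d : nat.

Definition adj (A : 'M[C]_d) : 'M[C]_d := A ^t*.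

Definition density (rho : 'M[C]_d) : Prop :=
  adj rho = rho /\
  (forall v : 'rV[C]_d, 0 <= (v *m rho *m v ^t*) 0 0) /\
  \tr rho = 1.

Definition hamil (h : 'I_d -> C) : 'M[C]_d := diag_mx (\row_k h k).

Definition proj (n : 'I_d) : 'M[C]_d := delta_mx n n.

Definition P_TPM (U rho : 'M[C]_d) (m n : 'I_d) : C :=
  \tr (proj m *m U *m proj n *m rho *m proj n *m adj U *m proj m).

Definition P_MH (U rho : 'M[C]_d) (m n : 'I_d) : C :=
  'Re (\tr (adj U *m proj m *m U *m proj n *m rho)).

Definition moment (P : 'I_d -> 'I_d -> C) (h : 'I_d -> C) (k : nat) : C :=
  \sum_(m < d) \sum_(n < d) P m n * (h m - h n) ^+ k.

Definition w2_TPM (h : 'I_d -> C) (U rho : 'M[C]_d) : C := moment (P_TPM U rho) h 2.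
Definition w2_MH (h : 'I_d -> C) (U rho : 'M[C]_d) : C := moment (P_MH U rho) h 2.

Definition Cl1 (rho : 'M[C]_d) : C := \sum_(i < d) \sum_(j < d | i != j) `|rho i j|.

Definition trH2 (h : 'I_d -> C) : C := \tr (hamil h *m hamil h).
Definition trabsH (h : 'I_d -> C) : C := \sum_(k < d) `|h k|.
Definition maxabsh (h : 'I_d -> C) : C := \big[Num.max/0]_(k < d) `|h k|.
End Defs.

From HB Require Import structures.
From mathcomp Require Import all_boot all_order all_algebra.
From mathcomp Require Import sesquilinear spectral.
From mathcomp Require Import ring.
Import Order.TTheory GRing.Theory Num.Theory.
Set Implicit Arguments. Unset Strict Implicit. Unset Printing Implicit Defensive.
Local Open Scope ring_scope.

(* Writing c_mn = (h_m - h_n)^2, both second moments are real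
   parts of sums of u_mi^* u_mn rho_ni c_mn:  the Margenau-Hill moment sums
   over all (m, n, i), the two-point-measurement moment only over i = n.
   Hence their difference is  Re D  with
       D = sum_(n <> i) rho_ni E_ni,   E_ni = sum_m u_mi^* u_mn c_mn,
   a sum over the off-diagonal entries of rho only.
   (1) For n <> i the columns i, n of U are orthogonal, so the h_n^2 part of
       c_mn drops out of E_ni; each |u_mi u_mn| <= 1/2 by AM-GM on a row of
       U, whence 2|E_ni| <= sum_m (h_m^2 + 2 |h_m| max|h|)
                        = Tr H^2 + 2 max|h| Tr|H|.
       Summing |rho_ni| over n <> i gives the bound with C_l1(rho); it holds
       in every dimension. *)

Section CyclicWork.
Variable C : numClosedFieldType.
Variable d : nat.
Implicit Types (A B U rho : 'M[C]_d) (h : 'I_d -> C).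

Lemma mulmx_delta_entry A B (a b i j : 'I_d) :
  (A *m (delta_mx a b *m B)) i j = A i a * B b j.
Proof.
rewrite mxE (bigD1 a) //= big1 ?addr0.
  rewrite mxE (bigD1 b) //= big1 ?addr0; first by rewrite mxE !eqxx mul1r.
  by move=> k kb; rewrite mxE eqxx (negPf kb) mul0r.
move=> k ka; rewrite mxE big1 ?mulr0 // => l _.
by rewrite mxE (negPf ka) mul0r.
Qed.

Lemma mulmx_delta_right A (a b i j : 'I_d) :
  (A *m delta_mx a b) i j = A i a * (b == j)%:R.
Proof.
rewrite mxE (bigD1 a) //= big1 ?addr0; first by rewrite mxE eqxx andTb eq_sym.
by move=> k ka; rewrite mxE (negPf ka) mulr0.
Qed.

Lemma mxtrace_delta_mul B (a b : 'I_d) : \tr (delta_mx a b *m B) = B b a.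
Proof.
rewrite /mxtrace (bigD1 a) //= big1 ?addr0.
  rewrite mxE (bigD1 b) //= big1 ?addr0; first by rewrite mxE !eqxx mul1r.
  by move=> k kb; rewrite mxE eqxx (negPf kb) mul0r.
move=> k ka; rewrite mxE big1 // => l _.
by rewrite mxE (negPf ka) mul0r.
Qed.

Lemma P_TPM_entry U rho (m n : 'I_d) :
  P_TPM U rho m n = (U m n)^* * U m n * rho n n.
Proof.
rewrite /P_TPM /proj -!mulmxA mxtrace_delta_mul !mulmx_delta_entry.
by rewrite mulmx_delta_right eqxx mulr1 /adj !mxE; ring.
Qed.

Lemma P_MH_entry U rho (m n : 'I_d) :
  P_MH U rho m n = 'Re (\sum_i (U m i)^* * U m n * rho n i).
Proof.
rewrite /P_MH /proj -!mulmxA /mxtrace; congr (Re _); apply: eq_bigr => i _.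
by rewrite !mulmx_delta_entry /adj !mxE mulrA.
Qed.

Definition coh_kernel h U (n i : 'I_d) : C :=
  \sum_m (U m i)^* * U m n * (h m - h n) ^+ 2.

Definition coh_term h U rho : C :=
  \sum_n \sum_(i | n != i) rho n i * coh_kernel h U n i.

Lemma w2_diff_coh_term h U rho :
  (forall k, h k \is Num.real) -> (forall n, rho n n \is Num.real) ->
  w2_MH h U rho - w2_TPM h U rho = 'Re (coh_term h U rho).
Proof.
move=> h_real rho_diag.
pose F m n i := (U m i)^* * U m n * rho n i * (h m - h n) ^+ 2.
have c_real m n : (h m - h n) ^+ 2 \is Num.real by rewrite realX // rpredB.
have MH : w2_MH h U rho = 'Re (\sum_m \sum_n \sum_i F m n i).
  rewrite /w2_MH /moment !raddf_sum; apply: eq_bigr => m _.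
  rewrite raddf_sum; apply: eq_bigr => n _.
  by rewrite P_MH_entry -ReMr // big_distrl.
have TPM : w2_TPM h U rho = 'Re (\sum_m \sum_n F m n n).
  rewrite /w2_TPM /moment !raddf_sum; apply: eq_bigr => m _.
  rewrite raddf_sum; apply: eq_bigr => n _.
  rewrite /F P_TPM_entry [(U m n)^* * _]mulrC -normCK; apply/esym/Creal_ReP.
  by rewrite rpredM ?c_real // rpredM ?rho_diag // realX ?normr_real.
rewrite MH TPM -raddfB -sumrB; congr (Re _).
transitivity (\sum_m \sum_n \sum_(i | n != i) F m n i).
  apply: eq_bigr => m _; rewrite -sumrB; apply: eq_bigr => n _.
  rewrite (bigD1 n) //= addrAC subrr add0r.
  by apply: eq_bigl => i; rewrite eq_sym.
rewrite exchange_big /coh_term; apply: eq_bigr => n _.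
rewrite exchange_big; apply: eq_bigr => i _.
by rewrite /coh_kernel big_distrr; apply: eq_bigr => m _; rewrite /F /=; ring.
Qed.

Lemma unitary_col_orth U : U \is unitarymx ->
  forall i n : 'I_d, \sum_m (U m i)^* * U m n = (i == n)%:R.
Proof.
rewrite -trmxC_unitary => /unitarymxP; rewrite trmxCK => /matrixP UU i n.
by have := UU i n; rewrite !mxE => <-; apply: eq_bigr => m _; rewrite !mxE.
Qed.

Lemma unitary_row_norm U : U \is unitarymx ->
  forall m : 'I_d, \sum_k `|U m k| ^+ 2 = 1.
Proof.
move=> /unitarymxP /matrixP UU m.
have := UU m m; rewrite !mxE eqxx mulr1n => <-.
by apply: eq_bigr => k _; rewrite !mxE normCK.
Qed.

(* AM-GM on a row: two distinct entries satisfy 2 |u_mi| |u_mn| <= 1. *)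
Lemma unitary_entry_pair U : U \is unitarymx ->
  forall m i n : 'I_d, i != n -> `|U m i| * `|U m n| *+ 2 <= 1.
Proof.
move=> Uu m i n ni.
apply: le_trans (real_leif_mean_square_scaled _ _) _; rewrite ?normr_real //.
rewrite -(unitary_row_norm Uu m) (bigD1 i) //= (bigD1 n) 1?eq_sym //= addrA.
by rewrite lerDl sumr_ge0 // => k _; rewrite exprn_ge0.
Qed.

(* The running maximum of |h_k| over a list is nonnegative and dominates
   every entry; Num.max is not a total-order max on C, hence the induction. *)
Lemma bigmax_norm_seq h (r : seq 'I_d) :
  0 <= \big[Num.max/0]_(k <- r) `|h k| /\
  forall k, k \in r -> `|h k| <= \big[Num.max/0]_(k <- r) `|h k|.
Proof.
elim: r => [|a r [IH0 IH]]; first by rewrite big_nil.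
rewrite big_cons comparable_maxEge ?real_comparable ?normr_real ?ger0_real //.
case: ifPn => [le_a|lt_a].
  by split=> // k; rewrite inE => /predU1P[->//|/IH/le_trans->].
have le_a : `|h a| <= \big[Num.max/0]_(k <- r) `|h k|.
  by rewrite ltW // real_ltNge ?lt_a ?normr_real ?ger0_real.
by split=> // k; rewrite inE => /predU1P[->|/IH].
Qed.

Lemma maxabsh_ge h n : `|h n| <= maxabsh h.
Proof. by have [_ ->] := bigmax_norm_seq h (index_enum 'I_d); rewrite ?mem_index_enum. Qed.

Lemma maxabsh_ge0 h : 0 <= maxabsh h.
Proof. by have [-> _] := bigmax_norm_seq h (index_enum 'I_d). Qed.

Lemma trH2_sum h : (forall k, h k \is Num.real) -> trH2 h = \sum_k `|h k| ^+ 2.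
Proof.
move=> h_real; rewrite /trH2 /hamil mulmx_diag mxtrace_diag.
by apply: eq_bigr => k _; rewrite !mxE real_normK // expr2.
Qed.

(* Column orthogonality removes the h_n^2 part of (h_m - h_n)^2 in E_ni. *)
Lemma coh_kernel_orth h U (n i : 'I_d) : U \is unitarymx -> n != i ->
  coh_kernel h U n i =
  \sum_m (U m i)^* * U m n * (h m ^+ 2 - 2%:R * h m * h n).
Proof.
move=> Uu ni; rewrite /coh_kernel.
transitivity (\sum_m ((U m i)^* * U m n * (h m ^+ 2 - 2%:R * h m * h n)
                     + (U m i)^* * U m n * h n ^+ 2)).
  by apply: eq_bigr => m _; ring.
rewrite big_split /= -big_distrl /= unitary_col_orth // eq_sym (negPf ni).
by rewrite mul0r addr0.
Qed.

Lemma coh_kernel_bound h U (n i : 'I_d) :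
  (forall k, h k \is Num.real) -> U \is unitarymx -> n != i ->
  `|coh_kernel h U n i| *+ 2 <= trH2 h + 2%:R * maxabsh h * trabsH h.
Proof.
move=> h_real Uu ni; rewrite coh_kernel_orth //.
pose b m := `|h m| ^+ 2 + 2%:R * `|h m| * maxabsh h.
have b_ge0 m : 0 <= b m by rewrite addr_ge0 ?exprn_ge0 ?mulr_ge0 ?maxabsh_ge0.
have weight m : `|h m ^+ 2 - 2%:R * h m * h n| <= b m.
  apply: le_trans (ler_normB _ _) _; rewrite normrX lerD2l !normrM normr_nat.
  by rewrite -!mulrA ler_wpM2l // ler_wpM2l // maxabsh_ge.
have coeff m : `|(U m i)^* * U m n| *+ 2 <= 1.
  by rewrite normrM norm_conjC unitary_entry_pair // eq_sym.
have -> : trH2 h + 2%:R * maxabsh h * trabsH h = \sum_m b m.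
  rewrite big_split /= trH2_sum // /trabsH big_distrr /=.
  by congr (_ + _); apply: eq_bigr => m _; ring.
apply: le_trans (ler_wMn2r 2 (ler_norm_sum _ _ _)) _.
rewrite -sumrMnl; apply: ler_sum => m _.
rewrite normrM -mulrnAl -[b m]mul1r.
by apply: ler_pM; rewrite ?mulrn_wge0.
Qed.

Lemma coh_term_bound h U rho :
  (forall k, h k \is Num.real) -> U \is unitarymx ->
  `|coh_term h U rho| <= Cl1 rho / 2%:R * (trH2 h + 2%:R * maxabsh h * trabsH h).
Proof.
move=> h_real Uu; apply: le_trans (ler_norm_sum _ _ _) _.
rewrite /Cl1 mulrAC -mulrA big_distrl /=; apply: ler_sum => n _.
apply: le_trans (ler_norm_sum _ _ _) _.
rewrite big_distrl /=; apply: ler_sum => i ni.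
rewrite normrM ler_wpM2l // ler_pdivlMr ?ltr0n // mulr_natr.
exact: coh_kernel_bound.
Qed.

Lemma density_herm rho : density rho ->
  forall i j, (rho j i)^* = rho i j.
Proof.
by move=> [rho_herm _] i j; rewrite -[in RHS]rho_herm /adj !mxE.
Qed.

Lemma density_diag_real rho :
  density rho -> forall n, rho n n \is Num.real.
Proof. by move=> rho_dens n; rewrite CrealE density_herm. Qed.

End CyclicWork.

Section Qubit.
Variable C : numClosedFieldType.
Let o0 : 'I_2 := ord0.
Let o1 : 'I_2 := ord_max.

Lemma sum_qubit (F : 'I_2 -> C) : \sum_i F i = F o0 + F o1.
Proof. by rewrite big_ord_recl big_ord1; congr (_ + F _); apply: val_inj. Qed.

(* E_10 = - E_01^*, by orthogonality of the two columns of U. *)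
Lemma qubit_coh_kernel_antiherm (h : 'I_2 -> C) (U : 'M[C]_2) :
  (forall k, h k \is Num.real) -> U \is unitarymx ->
  coh_kernel h U o1 o0 = - (coh_kernel h U o0 o1)^*.
Proof.
move=> h_real Uu.
have c_real : (h o1 - h o0)^* = h o1 - h o0 by rewrite conj_Creal // rpredB.
have orth := unitary_col_orth Uu o0 o1; rewrite sum_qubit in orth.
have cols : (U o0 o0)^* * U o0 o1 = - ((U o1 o0)^* * U o1 o1).
  by apply/eqP; rewrite -addr_eq0 orth.
rewrite /coh_kernel !sum_qubit !subrr expr0n /= !mulr0 add0r addr0.
rewrite rmorphM rmorphXn /= c_real rmorphM /= conjCK cols.
by rewrite -opprB sqrrN; ring.
Qed.

(* The coherent term of a qubit is z - z^*, hence purely imaginary. *)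
Lemma qubit_coh_term_Re (h : 'I_2 -> C) (rho U : 'M[C]_2) :
  (forall k, h k \is Num.real) -> density rho -> U \is unitarymx ->
  'Re (coh_term h U rho) = 0.
Proof.
move=> h_real rho_dens Uu.
rewrite /coh_term sum_qubit !(big_mkcond (fun i => _ != i)) !sum_qubit /=.
rewrite add0r addr0 qubit_coh_kernel_antiherm //.
rewrite -(density_herm rho_dens o1 o0) mulrN -rmorphM /=.
by rewrite raddfB /= Re_conj subrr.
Qed.

End Qubit.

Theorem theorem2 (C : numClosedFieldType) :
  (forall (d : nat), (2 <= d)%N ->
   forall (h : 'I_d -> C) (rho U : 'M[C]_d),
     (forall k, h k \is Num.real) -> density rho -> U \is unitarymx ->
     `|w2_MH h U rho - w2_TPM h U rho|
       <= Cl1 rho / 2%:R * (trH2 h + 2%:R * maxabsh h * trabsH h))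
  /\
  (forall (h : 'I_2 -> C) (rho U : 'M[C]_2),
     (forall k, h k \is Num.real) -> density rho -> U \is unitarymx ->
     w2_MH h U rho = w2_TPM h U rho).
Proof.
split=> [d _ h rho U h_real rho_dens Uu | h rho U h_real rho_dens Uu].
  rewrite w2_diff_coh_term //; last exact: density_diag_real.
  apply: le_trans (leif_normC_Re_Creal _).1 _; exact: coh_term_bound.
apply/eqP; rewrite -subr_eq0 w2_diff_coh_term //; last exact: density_diag_real.
by rewrite qubit_coh_term_Re.
Qed.
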